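(* Let $q\ge 2$, $n\ge 1$ and $\varepsilon\in\mathbb{N}$ with $\varepsilon\le n$. Let $x\in\mathbb{Z}_q^n$ be a hidden vector, and suppose the attacker has access to an oracle $\texttt{Match}_{x,\varepsilon}$ which, on a query $y\in\mathbb{Z}_q^n$, returns $1$ if $d(x,y)\le\varepsilon$ and $0$ otherwise, and which additionally reveals, whenever $d(x,y)\le\varepsilon$, the error positions $\{i: x_i\neq y_i\}$ together with the corresponding error values (enough to correct $y_i$ to $x_i$ at each such position). Then there is an adaptive query strategy that recovers $x$ using $\mathcal{O}(q^{n-\varepsilon})$ queries to $\texttt{Match}_{x,\varepsilon}$.
   Context: $\mathbb{Z}_q^n=\{0,\dots,q-1\}^n$ is equipped with the Hamming distance $d(x,y)=|\{i\in\{1,\dots,n\}: x_i\neq y_i\}|$. The attacker may choose each query adaptively based on previous oracle answers; complexity is measured as the number of oracle queries. *)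

From mathcomp Require Import all_boot.
Set Implicit Arguments. Unset Strict Implicit. Unset Printing Implicit Defensive.

Definition vec (n q : nat) := {ffun 'I_n -> 'I_q}.

Definition hdist (n q : nat) (x y : vec n q) : nat := #|[set i | x i != y i]|.

(* Answer of Match_{x,eps}: None = "0" (d(x,y) > eps);
   Some e = "1", where e i = Some (x i) at each error position i (x i != y i)
   and e i = None elsewhere: error positions together with correcting values. *)
Definition answer (n q : nat) := option {ffun 'I_n -> option 'I_q}.

Definition match_oracle (n q eps : nat) (x : vec n q) (y : vec n q) : answer n q :=
  if hdist x y <= eps then
    Some [ffun i => if x i != y i then Some (x i) else None]
  else None.

Inductive strategy (n q : nat) : Type :=
  | Output : vec n q -> strategy n q
  | Query : vec n q -> (answer n q -> strategy n q) -> strategy n q.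

Fixpoint run (n q eps : nat) (x : vec n q) (s : strategy n q) : vec n q * nat :=
  match s with
  | Output g => (g, 0)
  | Query y k => let r := run eps x (k (match_oracle eps x y)) in (r.1, r.2.+1)
  end.

(* Every x lies within Hamming distance eps of the vector that agrees with x on
   its first n - eps coordinates and is 0 on the last eps ones, and there are
   only q ^ (n - eps) such padded vectors.  Querying them one after the other,
   the first answer 1 reveals every error position together with its correct
   value, so the query can be repaired into x. *)

From mathcomp Require Import all_boot.
Set Implicit Arguments. Unset Strict Implicit. Unset Printing Implicit Defensive.

Section Recovery.
Variables n q : nat.

Definition correct (y : vec n q) (e : {ffun 'I_n -> option 'I_q}) : vec n q :=
  [ffun i => odflt (y i) (e i)].

Lemma correct_errors (x y : vec n q) :
  correct y [ffun i => if x i != y i then Some (x i) else None] = x.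
Proof. by apply/ffunP => i; rewrite !ffunE; case: eqVneq => [->|]. Qed.

Section Scan.
Variable eps : nat.

Fixpoint scan (d : vec n q) (l : seq (vec n q)) : strategy n q :=
  match l with
  | [::] => Output d
  | y :: l' => Query y (fun a => if a is Some e then Output (correct y e)
                                 else scan d l')
  end.

Lemma run_scan (d x y : vec n q) (l : seq (vec n q)) :
  y \in l -> hdist x y <= eps ->
  (run eps x (scan d l)).1 = x /\ (run eps x (scan d l)).2 <= size l.
Proof.
elim: l => //= y' l IHl; rewrite inE /match_oracle.
case: ifP => [_ _ _ | far_y' /predU1P [eq_yy' | yl] close_y] /=.
- by rewrite correct_errors.
- by rewrite -eq_yy' close_y in far_y'.
- by have [-> le_size] := IHl yl close_y; split.
Qed.

End Scan.

Section Padding.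
Variables (m : nat) (le_mn : m <= n) (z : 'I_q).

Definition prefix (x : vec n q) : {ffun 'I_m -> 'I_q} :=
  [ffun j => x (widen_ord le_mn j)].

Definition pad (p : {ffun 'I_m -> 'I_q}) : vec n q :=
  [ffun i => if (insub (val i) : option 'I_m) is Some j then p j else z].

Lemma pad_widen (p : {ffun 'I_m -> 'I_q}) (j : 'I_m) :
  pad p (widen_ord le_mn j) = p j.
Proof.
rewrite ffunE; case: insubP => [j' _ /val_inj -> // | ].
by rewrite /= ltn_ord.
Qed.

Lemma card_notin_widen_ord :
  #|~: [set widen_ord le_mn j | j : 'I_m]| = n - m.
Proof.
have widen_inj : injective (widen_ord le_mn) by move=> i j [] /val_inj.
by rewrite -[n in RHS](card_ord n) -(cardsC [set widen_ord le_mn j | j : 'I_m])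
  card_imset // card_ord addKn.
Qed.

Lemma hdist_pad_prefix (x : vec n q) : hdist x (pad (prefix x)) <= n - m.
Proof.
rewrite /hdist -card_notin_widen_ord; apply/subset_leq_card/subsetP => i.
rewrite !inE; apply: contra => /imsetP [j _ ->].
by rewrite pad_widen ffunE.
Qed.

End Padding.
End Recovery.

Arguments pad {n q m} z p.

Theorem theorem3 :
  exists C : nat,
  forall (q n eps : nat), 2 <= q -> 1 <= n -> eps <= n ->
  exists s : strategy n q,
    forall x : vec n q,
      (run eps x s).1 = x /\ (run eps x s).2 <= C * q ^ (n - eps).
Proof.
exists 1 => q n eps q_ge2 _ le_eps_n.
have z : 'I_q := Ordinal (ltnW q_ge2).
have le_mn : n - eps <= n := leq_subr eps n.
pose candidates : seq (vec n q) := map (pad z) (enum {ffun 'I_(n - eps) -> 'I_q}).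
exists (scan [ffun => z] candidates) => x.
have x_candidate : pad z (prefix le_mn x) \in candidates.
  by rewrite map_f ?mem_enum.
have close_x : hdist x (pad z (prefix le_mn x)) <= eps.
  by rewrite (leq_trans (hdist_pad_prefix _ _ _)) // subKn.
have [-> queries] := run_scan [ffun => z] x_candidate close_x.
split=> //; rewrite mul1n (leq_trans queries) //.
by rewrite size_map -cardE card_ffun !card_ord.
Qed.
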